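(* Let $0\le k\le n$, let $A=(a_{i,j})\in\mathbb{R}^{n\times n}$ be a Monge matrix and $B=(b_{i,j})\in\mathbb{R}^{n\times n}$ an Anti-Monge matrix, and consider RecovAP with $c_1(\{u_i,v_j\})=a_{i,j}$ and $c_2(\{u_i,v_j\})=b_{i,j}$. Let $m=\lfloor\frac{n-k}{2}\rfloor$ and $I=\{1,\dots,m\}\cup\{n+1-m,\dots,n\}$. Then there exists an optimal solution $M_1,M_2$ such that (1) $\{u_i,v_i\}\in M_1$ for all $i\in I$; (2) $\{u_i,v_{n+1-i}\}\in M_2$ for all $i\in I$; (3) $M_1\cap M_2$ is an optimal solution of the assignment problem with cost $c_1+c_2$ (i.e. a minimum-cost perfect matching with respect to $c_1+c_2$) on the complete bipartite subgraph induced by $\{u_i: m+1\le i\le n-m\}$ and $\{v_i: m+1\le i\le n-m\}$.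
   Context: $K_{n,n}$ has vertex classes $U=\{u_1,\dots,u_n\}$, $V=\{v_1,\dots,v_n\}$. RecovAP: given $c_1,c_2:E(K_{n,n})\to\mathbb{R}$ and an integer $k$, find perfect matchings $M_1,M_2$ of $K_{n,n}$ with $|M_1\cap M_2|\ge k$ minimizing $c_1(M_1)+c_2(M_2)$; an optimal solution is a minimizing feasible pair. A matrix $A$ is Monge if $a_{i,j}+a_{k,l}\le a_{i,l}+a_{k,j}$ for all $i<k$, $j<l$; a matrix $B$ is Anti-Monge if $b_{i,j}+b_{k,l}\ge b_{i,l}+b_{k,j}$ for all $i<k$, $j<l$. *)

(* Vertices u_i, v_j of K_{n,n} are indexed (0-based) by 'I_n;
   the edge {u_i, v_j} is the pair (i, j) : 'I_n * 'I_n. *)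
From mathcomp Require Import all_boot all_order all_algebra.
Set Implicit Arguments. Unset Strict Implicit. Unset Printing Implicit Defensive.
Import Order.TTheory GRing.Theory Num.Theory.
Local Open Scope ring_scope.

Definition monge (R : realFieldType) (n : nat) (A : 'M[R]_n) : Prop :=
  forall i k j l : 'I_n, (i < k)%N -> (j < l)%N -> A i j + A k l <= A i l + A k j.
Definition anti_monge (R : realFieldType) (n : nat) (B : 'M[R]_n) : Prop :=
  forall i k j l : 'I_n, (i < k)%N -> (j < l)%N -> B i j + B k l >= B i l + B k j.

Definition is_pm (n : nat) (S : {set 'I_n}) (M : {set 'I_n * 'I_n}) : Prop :=
  M \subset setX S S /\
  (forall i, i \in S -> #|[set j | (i, j) \in M]| = 1%N) /\
  (forall j, j \in S -> #|[set i | (i, j) \in M]| = 1%N).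

Definition perfect_matching (n : nat) (M : {set 'I_n * 'I_n}) : Prop :=
  is_pm [set: 'I_n] M.

Definition mcost (R : realFieldType) (n : nat) (C : 'M[R]_n) (M : {set 'I_n * 'I_n}) : R :=
  \sum_(e in M) C e.1 e.2.

Definition recov_feasible (n k : nat) (M1 M2 : {set 'I_n * 'I_n}) : Prop :=
  perfect_matching M1 /\ perfect_matching M2 /\ (k <= #|M1 :&: M2|)%N.

Definition recov_optimal (R : realFieldType) (n : nat) (c1 c2 : 'M[R]_n) (k : nat)
    (M1 M2 : {set 'I_n * 'I_n}) : Prop :=
  recov_feasible k M1 M2 /\
  forall N1 N2, recov_feasible k N1 N2 ->
    mcost c1 M1 + mcost c2 M2 <= mcost c1 N1 + mcost c2 N2.

Definition opt_assignment (R : realFieldType) (n : nat) (C : 'M[R]_n)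
    (S : {set 'I_n}) (M : {set 'I_n * 'I_n}) : Prop :=
  is_pm S M /\ forall M', is_pm S M' -> mcost C M <= mcost C M'.

From mathcomp Require Import all_boot all_order all_algebra all_fingroup zify lra.
Set Implicit Arguments. Unset Strict Implicit. Unset Printing Implicit Defensive.
Import Order.TTheory GRing.Theory Num.Theory.
Local Open Scope ring_scope.

(* Encode M1 and M2 by permutations p and q of 'I_n, so that #|M1 :&: M2| is
   the number of agreements p i = q i.  Starting from any feasible pair we make
   p the identity and q the reversal on the outer rows and columns, one layer
   r at a time, never increasing the cost nor dropping below k agreements.
   Inside the current window, exchanges justified by the Monge and anti-Monge
   inequalities first uncross the disagreements (a bounded potential strictly
   increases), after which the disagreeing rows [a..b] and columns [x..y] form
   a box with p : a |-> x, b |-> y and q : a |-> y, b |-> x.  Three-cycles then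
   stretch the box to the border of the window, which settles the outer layer.
   If there are no disagreements, two agreements on the border can be given up
   to create a box, since 2 (r + 1) <= n - k.  At depth m = (n - k) / 2 a
   counting argument forces p = q on the window, so the cost is a constant plus
   an assignment cost for c1 + c2 on the middle block; a minimal assignment
   there gives the optimal solution. *)

Lemma big_agree_off (V : Type) (idx : V) (op : Monoid.com_law idx) (T : finType)
    (F G : T -> V) (s : seq T) :
  uniq s -> (forall i, i \notin s -> G i = F i) ->
  op (\big[op/idx]_i G i) (\big[op/idx]_(i <- s) F i) =
  op (\big[op/idx]_i F i) (\big[op/idx]_(i <- s) G i).
Proof.
move=> us GF; rewrite (big_uniq _ (F:=F) us) (big_uniq _ (F:=G) us).
rewrite (bigID (mem s) predT G) (bigID (mem s) predT F) /=.
rewrite [X in op (op _ X) _](eq_bigr F) => [|i /GF //].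
set g := \big[op/idx]_(i in s) G i.
by rewrite Monoid.mulmAC [RHS]Monoid.mulmAC (Monoid.mulmC _ g).
Qed.

Section Moves.
Variable T : finType.

Definition swap_at (u v : T) (p : {perm T}) : {perm T} := (tperm u v * p)%g.
Definition rotate_at (u v w : T) (p : {perm T}) : {perm T} := (tperm u v * tperm v w * p)%g.

Lemma swap_atE (u v : T) p :
  [/\ swap_at u v p u = p v, swap_at u v p v = p u &
      forall i, i \notin [:: u; v] -> swap_at u v p i = p i].
Proof.
rewrite /swap_at !permM tpermL tpermR; split => // i.
by rewrite !inE negb_or => /andP[iu iv]; rewrite permM tpermD // eq_sym.
Qed.

Lemma rotate_atE (u v w : T) p : uniq [:: u; v; w] ->
  [/\ rotate_at u v w p u = p w, rotate_at u v w p v = p u, rotate_at u v w p w = p v &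
      forall i, i \notin [:: u; v; w] -> rotate_at u v w p i = p i].
Proof.
rewrite /= !inE negb_or andbT => /andP[/andP[uv uw] vw]; rewrite /rotate_at !permM.
split; first by rewrite !tpermL.
- by rewrite tpermR tpermD // eq_sym.
- by rewrite (tpermD uw vw) tpermR.
by move=> i; rewrite !inE !negb_or => /and3P[iu iv iw]; rewrite !permM !tpermD // eq_sym.
Qed.

End Moves.

(* Lets [lia] see equalities of ordinals through their values. *)
Lemma ord_eqE n (i j : 'I_n) : (i == j) = (i == j :> nat).
Proof. by []. Qed.

(** * Pairs of permutations framed outside a window *)

Section Frame.
Variable n : nat.
Implicit Types (r : nat) (p q : {perm 'I_n}) (i : 'I_n) (s : seq 'I_n).

Definition window r : {set 'I_n} := [set i : 'I_n | (r <= i < n - r)%N].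

(* [p] and [q] encode [M1 = {(i, p i)}] and [M2 = {(i, q i)}]; [framed r p q] says
   that conditions (1) and (2) of the theorem already hold outside [window r]. *)
Definition framed r p q := forall i, i \notin window r -> p i = i /\ q i = rev_ord i.

Definition agreements p q : nat := (\sum_i (p i == q i : nat))%N.

(* Strictly increased by every uncrossing exchange, by the rearrangement inequality. *)
Definition potential p q : nat := (\sum_(i : 'I_n) (i * p i + i * rev_ord (q i)))%N.

Definition pair_cost (R : realFieldType) (A B : 'M[R]_n) p q : R :=
  \sum_i (A i (p i) + B i (q i)).

Definition agree_off s p q p' q' := forall i, i \notin s -> p' i = p i /\ q' i = q i.

Lemma mem_window r i : (i \in window r) = (r <= i < n - r)%N.
Proof. by rewrite inE. Qed.

Lemma window_rev r i : (rev_ord i \in window r) = (i \in window r).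
Proof. by rewrite !mem_window /=; have := ltn_ord i; lia. Qed.

Lemma framed_p_window r p q i : framed r p q -> i \in window r -> p i \in window r.
Proof.
move=> fr wi; apply: contraT => npi; have [/perm_inj pi_i _] := fr _ npi.
by rewrite pi_i wi in npi.
Qed.

Lemma framed_q_window r p q i : framed r p q -> i \in window r -> q i \in window r.
Proof.
move=> fr wi; apply: contraT; rewrite -window_rev => nqi.
have [_] := fr _ nqi; rewrite rev_ordK => /perm_inj qi_i.
by rewrite qi_i wi in nqi.
Qed.

Lemma framed_update r s p q p' q' :
  framed r p q -> {subset s <= window r} -> agree_off s p q p' q' -> framed r p' q'.
Proof.
move=> fr sw ag i wi; have /ag[-> ->] : i \notin s by apply: contra wi => /sw.
exact: fr.
Qed.

Section Update.
Variables (s : seq 'I_n) (p q p' q' : {perm 'I_n}).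
Hypotheses (us : uniq s) (ag : agree_off s p q p' q').

Lemma pair_cost_update (R : realFieldType) (A B : 'M[R]_n) :
  pair_cost A B p' q' + \sum_(i <- s) (A i (p i) + B i (q i)) =
  pair_cost A B p q + \sum_(i <- s) (A i (p' i) + B i (q' i)).
Proof. by apply: big_agree_off => // i /ag[-> ->]. Qed.

Lemma agreements_update :
  (agreements p' q' + \sum_(i <- s) (p i == q i : nat) =
   agreements p q + \sum_(i <- s) (p' i == q' i : nat))%N.
Proof. by apply: big_agree_off => // i /ag[-> ->]. Qed.

Lemma potential_update :
  (potential p' q' + \sum_(i <- s) (i * p i + i * rev_ord (q i)) =
   potential p q + \sum_(i <- s) (i * p' i + i * rev_ord (q' i)))%N.
Proof. by apply: big_agree_off => // i /ag[-> ->]. Qed.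

End Update.
End Frame.

Arguments window {n} r.

(** * Boxes *)

Section Box.
Variable n : nat.
Implicit Types (r : nat) (p q : {perm 'I_n}) (i a b x y : 'I_n) (s : seq 'I_n).

Definition in_box a b x y p q i :=
  [&& (a <= i <= b)%N, (x <= p i <= y)%N & (x <= q i <= y)%N].

Definition boxed r a b x y p q :=
  [/\ (a < b)%N, (x < y)%N, (a \in window r) && (b \in window r),
      [/\ p a = x, p b = y, q a = y & q b = x] &
      forall i, i \in window r -> p i != q i -> in_box a b x y p q i].

Definition subbox a b x y a' b' x' y' := [/\ a' <= a, b <= b', x' <= x & y <= y']%N.

Definition improves (R : realFieldType) (A B : 'M[R]_n) r p q p' q' :=
  [/\ framed r p' q', (agreements p q <= agreements p' q')%N &
      pair_cost A B p' q' <= pair_cost A B p q].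

Lemma improves_trans (R : realFieldType) (A B : 'M[R]_n) r p q p1 q1 p2 q2 :
  improves A B r p q p1 q1 -> improves A B r p1 q1 p2 q2 -> improves A B r p q p2 q2.
Proof.
case=> _ ag1 c1 [fr2 ag2 c2]; split => //; first exact: leq_trans ag2.
exact: le_trans c1.
Qed.

Lemma boxed_update r s a b x y a' b' x' y' p q p' q' :
  boxed r a b x y p q -> agree_off s p q p' q' -> subbox a b x y a' b' x' y' ->
  (a' \in window r) && (b' \in window r) ->
  [/\ p' a' = x', p' b' = y', q' a' = y' & q' b' = x'] ->
  (forall i, i \in s -> i \in window r -> p' i != q' i -> in_box a' b' x' y' p' q' i) ->
  boxed r a' b' x' y' p' q'.
Proof.
case=> ab xy _ _ box ag [a'a bb' x'x yy'] wab' corners box_s.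
split => //; try lia.
move=> i wi; have [/box_s|/ag] := boolP (i \in s); first exact.
rewrite /in_box => -[-> ->] /(box _ wi); rewrite /in_box; lia.
Qed.

End Box.

(* The first row [lo] of the window is an agreement with value [j]; depending on
   the position of [j] relative to [x] and [y], a three-cycle of [q], a double
   swap, or a three-cycle of [p] moves the top row of the box up to [lo]. *)
Section ExtendRowLow.
Variables (R : realFieldType) (n r : nat) (A B : 'M[R]_n).
Hypotheses (hA : monge A) (hB : anti_monge B).
Variables (p q : {perm 'I_n}) (a b x y lo j : 'I_n).
Hypotheses (fr : framed r p q) (bx : boxed r a b x y p q).
Hypotheses (lo_r : lo = r :> nat) (lo_a : (lo < a)%N) (plo : p lo = j).

Let ab : (a < b)%N. Proof. by case: bx. Qed.
Let xy : (x < y)%N. Proof. by case: bx. Qed.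
Let wa : a \in window r. Proof. by case: bx => _ _ /andP[]. Qed.
Let wb : b \in window r. Proof. by case: bx => _ _ /andP[]. Qed.
Let pa : p a = x. Proof. by case: bx => _ _ _ []. Qed.
Let pb : p b = y. Proof. by case: bx => _ _ _ []. Qed.
Let qa : q a = y. Proof. by case: bx => _ _ _ []. Qed.
Let qb : q b = x. Proof. by case: bx => _ _ _ []. Qed.
Let wlo : lo \in window r. Proof. by move: wa; rewrite !mem_window; lia. Qed.
Let qlo : q lo = j.
Proof.
case: bx => _ _ _ _ /(_ lo wlo); rewrite /in_box -plo.
by case: eqVneq => // _ /(_ isT); lia.
Qed.
Let u3 : uniq [:: lo; b; a]. Proof. by rewrite /= !inE !ord_eqE; lia. Qed.
Let w3 : {subset [:: lo; b; a] <= window r}.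
Proof. by move=> i; rewrite !in_cons in_nil orbF => /or3P[] /eqP ->. Qed.

Lemma extend_row_low_below : (j < x)%N ->
  let q' := rotate_at lo b a q in
  improves A B r p q p q' /\ boxed r lo b j y p q'.
Proof.
move=> jx q'; have [Q1 Q2 Q3 Q4] := rotate_atE q u3.
have ag : agree_off [:: lo; b; a] p q p q' by move=> i /Q4.
split; first split.
- exact: framed_update fr w3 ag.
- have := agreements_update u3 ag; rewrite !big_cons !big_nil Q1 Q2 Q3 pa pb qa qb plo qlo.
  rewrite !ord_eqE; lia.
- have := pair_cost_update u3 ag A B; rewrite !big_cons !big_nil Q1 Q2 Q3 pa pb qa qb plo qlo.
  have := hB lo_a (ltn_trans jx xy); have := hB ab jx; lra.
apply: (boxed_update bx ag) => //.
- by split; lia.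
- by rewrite wlo wb.
- by rewrite Q1 Q2 qa qlo.
move=> i; rewrite !inE /in_box => /or3P[] /eqP -> _;
  rewrite ?Q1 ?Q2 ?Q3 ?pa ?pb ?qa ?qb ?plo ?qlo; lia.
Qed.

Lemma extend_row_low_between : (x < j)%N -> (j < y)%N ->
  let p' := swap_at lo a p in let q' := swap_at lo a q in
  improves A B r p q p' q' /\ boxed r lo b x y p' q'.
Proof.
move=> xj jy p' q'; have [P1 P2 P3] := swap_atE lo a p; have [Q1 Q2 Q3] := swap_atE lo a q.
have u2 : uniq [:: lo; a] by rewrite /= inE ord_eqE; lia.
have ag : agree_off [:: lo; a] p q p' q' by move=> i ?; rewrite P3 ?Q3.
have nb : b \notin [:: lo; a] by rewrite !inE !ord_eqE; lia.
split; first split.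
- by apply: framed_update fr _ ag => i; rewrite !in_cons in_nil orbF => /orP[] /eqP ->.
- have := agreements_update u2 ag; rewrite !big_cons !big_nil P1 P2 Q1 Q2 pa qa plo qlo.
  rewrite !ord_eqE; lia.
- have := pair_cost_update u2 ag A B; rewrite !big_cons !big_nil P1 P2 Q1 Q2 pa qa plo qlo.
  have := hA lo_a xj; have := hB lo_a jy; lra.
apply: (boxed_update bx ag) => //.
- by split; lia.
- by rewrite wlo wb.
- by rewrite P1 Q1 (P3 _ nb) (Q3 _ nb) pa pb qa qb.
move=> i; rewrite !inE /in_box => /orP[] /eqP -> _; rewrite ?P1 ?P2 ?Q1 ?Q2 ?pa ?qa ?plo ?qlo; lia.
Qed.

Lemma extend_row_low_above : (y < j)%N ->
  let p' := rotate_at lo b a p in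
  improves A B r p q p' q /\ boxed r lo b x j p' q.
Proof.
move=> yj p'; have [P1 P2 P3 P4] := rotate_atE p u3.
have ag : agree_off [:: lo; b; a] p q p' q by move=> i /P4.
split; first split.
- exact: framed_update fr w3 ag.
- have := agreements_update u3 ag; rewrite !big_cons !big_nil P1 P2 P3 pa pb qa qb plo qlo.
  rewrite !ord_eqE; lia.
- have := pair_cost_update u3 ag A B; rewrite !big_cons !big_nil P1 P2 P3 pa pb qa qb plo qlo.
  have := hA lo_a (ltn_trans xy yj); have := hA ab yj; lra.
apply: (boxed_update bx ag) => //.
- by split; lia.
- by rewrite wlo wb.
- by rewrite P1 P2 pa plo qlo.
move=> i; rewrite !inE /in_box => /or3P[] /eqP -> _;
  rewrite ?P1 ?P2 ?P3 ?pa ?pb ?qa ?qb ?plo ?qlo; lia.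
Qed.

Lemma extend_row_low_agree : j != x /\ j != y.
Proof.
have lo_neq_a : lo != a by rewrite ord_eqE; lia.
by rewrite -pa -qa -{2}qlo -plo !(inj_eq perm_inj) lo_neq_a.
Qed.

End ExtendRowLow.

Lemma extend_row_low (R : realFieldType) n r (A B : 'M[R]_n) p q (a b x y lo : 'I_n) :
  monge A -> anti_monge B -> framed r p q -> boxed r a b x y p q ->
  lo = r :> nat -> (lo <= a)%N ->
  exists p' q' (x' y' : 'I_n),
    [/\ improves A B r p q p' q', boxed r lo b x' y' p' q', (x' <= x)%N & (y <= y')%N].
Proof.
move=> hA hB fr bx lo_r; rewrite leq_eqVlt => /orP[/eqP/val_inj lo_a|lo_a].
  by subst a; exists p, q, x, y; split.
have xy : (x < y)%N by case: bx.
have [jx jy] := extend_row_low_agree bx lo_r lo_a erefl.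
case: (ltngtP (p lo) x) => [j_x | x_j | /val_inj/eqP]; last by rewrite (negbTE jx).
  have [? ?] := extend_row_low_below A hB fr bx lo_r lo_a erefl j_x.
  by exists p, (rotate_at lo b a q), (p lo), y; split => //; lia.
case: (ltngtP (p lo) y) => [j_y | y_j | /val_inj/eqP]; last by rewrite (negbTE jy).
  have [? ?] := extend_row_low_between hA hB fr bx lo_r lo_a erefl x_j j_y.
  by exists (swap_at lo a p), (swap_at lo a q), x, y.
have [? ?] := extend_row_low_above B hA fr bx lo_r lo_a erefl y_j.
by exists (rotate_at lo b a p), q, x, (p lo); split => //; lia.
Qed.

(* Transposition (p to p^-1) and reversal of rows and columns (mirror) preserve
   Monge and anti-Monge matrices, framing, agreements and costs, so the other
   three sides of a box are extended by [extend_row_low] as well. *)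
Section Transpose.
Variables (n r : nat).
Implicit Types (p q : {perm 'I_n}) (a b x y : 'I_n).

Lemma framed_inv p q : framed r p q -> framed r p^-1 q^-1.
Proof.
move=> fr i wi; have [pi _] := fr i wi; rewrite -window_rev in wi.
have [_ qi] := fr _ wi; rewrite rev_ordK in qi.
by split; [rewrite -{1}pi | rewrite -{1}qi]; rewrite permK.
Qed.

Lemma agreements_inv p q : agreements p^-1 q^-1 = agreements p q.
Proof.
rewrite /agreements (reindex_inj (@perm_inj _ p)); apply: eq_bigr => i _.
by rewrite permK -(inj_eq (@perm_inj _ q)) permKV eq_sym.
Qed.

Lemma pair_cost_inv (R : realFieldType) (A B : 'M[R]_n) p q :
  pair_cost A B p^-1 q^-1 = pair_cost A^T B^T p q.
Proof.
rewrite /pair_cost !big_split /= (reindex_inj (@perm_inj _ p)).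
rewrite [X in _ + X = _](reindex_inj (@perm_inj _ q)).
by congr (_ + _); apply: eq_bigr => i _; rewrite permK !mxE.
Qed.

Lemma improves_inv (R : realFieldType) (A B : 'M[R]_n) p q p' q' :
  improves A^T B^T r p^-1 q^-1 p' q' -> improves A B r p q p'^-1 q'^-1.
Proof.
case=> /framed_inv fr ag c; split => //; first by rewrite agreements_inv -agreements_inv.
have -> : pair_cost A B p q = pair_cost A^T B^T p^-1 q^-1 by rewrite -pair_cost_inv !invgK.
by rewrite pair_cost_inv.
Qed.

Lemma boxed_inv p q a b x y :
  framed r p q -> boxed r a b x y p q -> boxed r x y a b p^-1 q^-1.
Proof.
move=> fr [ab xy /andP[wa wb] [pa pb qa qb] box]; split => //.
- by rewrite -pa -pb !(framed_p_window fr).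
- by split; [rewrite -pa | rewrite -pb | rewrite -qb | rewrite -qa]; rewrite permK.
move=> i wi ne; have frI := framed_inv fr.
have ne_u : p ((p^-1)%g i) != q ((p^-1)%g i).
  by rewrite permKV; apply: contra ne => /eqP e; rewrite {2}e permK.
have ne_w : p ((q^-1)%g i) != q ((q^-1)%g i).
  by rewrite permKV; apply: contra ne => /eqP e; rewrite -{1}e permK.
move: (box _ (framed_p_window frI wi) ne_u) (box _ (framed_q_window frI wi) ne_w).
by rewrite /in_box !permKV; lia.
Qed.

End Transpose.

Section Mirror.
Variables (n r : nat).
Implicit Types (p q : {perm 'I_n}) (a b x y : 'I_n).

Definition mirror p : {perm 'I_n} := let s := perm (@rev_ord_inj n) in (s * p * s)%g.

Definition mirror_mx (R : Type) (A : 'M[R]_n) := \matrix_(i, j) A (rev_ord i) (rev_ord j).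

Lemma mirrorE p i : mirror p i = rev_ord (p (rev_ord i)).
Proof. by rewrite !permM !permE. Qed.

Lemma mirrorK : involutive mirror.
Proof. by move=> p; apply/permP => i; rewrite !mirrorE !rev_ordK. Qed.

Lemma framed_mirror p q : framed r p q -> framed r (mirror p) (mirror q).
Proof.
move=> fr i; rewrite -window_rev => /fr[pi qi].
by rewrite !mirrorE pi qi !rev_ordK.
Qed.

Lemma agreements_mirror p q : agreements (mirror p) (mirror q) = agreements p q.
Proof.
rewrite /agreements (reindex_inj (@rev_ord_inj n)); apply: eq_bigr => i _.
by rewrite !mirrorE rev_ordK (inj_eq (@rev_ord_inj n)).
Qed.

Lemma pair_cost_mirror (R : realFieldType) (A B : 'M[R]_n) p q :
  pair_cost A B (mirror p) (mirror q) = pair_cost (mirror_mx A) (mirror_mx B) p q.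
Proof.
rewrite /pair_cost (reindex_inj (@rev_ord_inj n)); apply: eq_bigr => i _.
by rewrite !mirrorE !mxE !rev_ordK.
Qed.

Lemma improves_mirror (R : realFieldType) (A B : 'M[R]_n) p q p' q' :
  improves (mirror_mx A) (mirror_mx B) r (mirror p) (mirror q) p' q' ->
  improves A B r p q (mirror p') (mirror q').
Proof.
case=> /framed_mirror fr ag c; split => //; first by rewrite agreements_mirror -agreements_mirror.
by rewrite pair_cost_mirror -[in leRHS](mirrorK p) -[in leRHS](mirrorK q) pair_cost_mirror.
Qed.

Lemma boxed_mirror p q a b x y : boxed r a b x y p q ->
  boxed r (rev_ord b) (rev_ord a) (rev_ord y) (rev_ord x) (mirror p) (mirror q).
Proof.
case=> ab xy wab [pa pb qa qb] box; split.
- by rewrite /=; have := ltn_ord b; lia.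
- by rewrite /=; have := ltn_ord y; lia.
- by rewrite !window_rev andbC.
- by rewrite !mirrorE !rev_ordK pa pb qa qb.
move=> i; rewrite -window_rev => wi.
rewrite /in_box !mirrorE (inj_eq (@rev_ord_inj n)) => /(box _ wi); rewrite /in_box /=.
by have := ltn_ord i; have := ltn_ord a; have := ltn_ord b; have := ltn_ord x; have := ltn_ord y;
  have := ltn_ord (p (rev_ord i)); have := ltn_ord (q (rev_ord i)); lia.
Qed.

End Mirror.

Lemma monge_tr (R : realFieldType) n (A : 'M[R]_n) : monge A -> monge A^T.
Proof. by move=> hA i k j l ik jl; rewrite !mxE [in leRHS]addrC; apply: hA. Qed.

Lemma anti_monge_tr (R : realFieldType) n (B : 'M[R]_n) : anti_monge B -> anti_monge B^T.
Proof. by move=> hB i k j l ik jl; rewrite !mxE [in leLHS]addrC; apply: hB. Qed.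

Lemma monge_mirror (R : realFieldType) n (A : 'M[R]_n) : monge A -> monge (mirror_mx A).
Proof.
move=> hA i k j l ik jl; rewrite !mxE [in leLHS]addrC [in leRHS]addrC.
by apply: hA; rewrite /=; have := ltn_ord k; have := ltn_ord l; lia.
Qed.

Lemma anti_monge_mirror (R : realFieldType) n (B : 'M[R]_n) : anti_monge B -> anti_monge (mirror_mx B).
Proof.
move=> hB i k j l ik jl; rewrite !mxE [in leLHS]addrC [in leRHS]addrC.
by apply: hB; rewrite /=; have := ltn_ord k; have := ltn_ord l; lia.
Qed.

Section Extend.
Variables (R : realFieldType) (n r : nat) (A B : 'M[R]_n).
Hypotheses (hA : monge A) (hB : anti_monge B).
Variables (p q : {perm 'I_n}) (a b x y : 'I_n).
Hypotheses (fr : framed r p q) (bx : boxed r a b x y p q).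

Lemma extend_row_high (hi : 'I_n) : hi = (n - r.+1)%N :> nat -> (b <= hi)%N ->
  exists p' q' (x' y' : 'I_n),
    [/\ improves A B r p q p' q', boxed r a hi x' y' p' q', (x' <= x)%N & (y <= y')%N].
Proof.
move=> hi_r b_hi; have /andP[_ wb] : (a \in window r) && (b \in window r) by case: bx.
have [||p1 [q1 [x1 [y1 [imp1 bx1 x1y y1x]]]]] := extend_row_low (lo := rev_ord hi)
  (monge_mirror hA) (anti_monge_mirror hB) (framed_mirror fr) (boxed_mirror bx).
- by move: wb; rewrite mem_window /= hi_r; lia.
- by rewrite /=; have := ltn_ord b; lia.
exists (mirror p1), (mirror q1), (rev_ord y1), (rev_ord x1); split.
- exact: improves_mirror.
- by have := boxed_mirror bx1; rewrite !rev_ordK.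
- by move: y1x; rewrite /=; have := ltn_ord x; have := ltn_ord y1; lia.
by move: x1y; rewrite /=; have := ltn_ord y; have := ltn_ord x1; lia.
Qed.

Lemma extend_col_low (lo : 'I_n) : lo = r :> nat -> (lo <= x)%N ->
  exists p' q' (a' b' : 'I_n),
    [/\ improves A B r p q p' q', boxed r a' b' lo y p' q', (a' <= a)%N & (b <= b')%N].
Proof.
move=> lo_r lo_x.
have [p1 [q1 [a1 [b1 [imp1 bx1 a1a bb1]]]]] := extend_row_low (monge_tr hA) (anti_monge_tr hB)
  (framed_inv fr) (boxed_inv fr bx) lo_r lo_x.
exists p1^-1%g, q1^-1%g, a1, b1; split => //; first exact: improves_inv.
by apply: boxed_inv; case: imp1.
Qed.

End Extend.

Lemma extend_col_high (R : realFieldType) n r (A B : 'M[R]_n) p q (a b x y hi : 'I_n) :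
  monge A -> anti_monge B -> framed r p q -> boxed r a b x y p q ->
  hi = (n - r.+1)%N :> nat -> (y <= hi)%N ->
  exists p' q' (a' b' : 'I_n),
    [/\ improves A B r p q p' q', boxed r a' b' x hi p' q', (a' <= a)%N & (b <= b')%N].
Proof.
move=> hA hB fr bx hi_r y_hi.
have [p1 [q1 [a1 [b1 [imp1 bx1 a1a bb1]]]]] := extend_row_high (monge_tr hA) (anti_monge_tr hB)
  (framed_inv fr) (boxed_inv fr bx) hi_r y_hi.
exists p1^-1%g, q1^-1%g, a1, b1; split => //; first exact: improves_inv.
by apply: boxed_inv; case: imp1.
Qed.

Lemma boxed_window n r (p q : {perm 'I_n}) (a b x y : 'I_n) :
  framed r p q -> boxed r a b x y p q ->
  [/\ a \in window r, b \in window r, x \in window r & y \in window r].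
Proof.
move=> fr [_ _ /andP[wa wb] [pa pb _ _] _].
by rewrite -pa -pb !(framed_p_window fr).
Qed.

Lemma framed_succ n r (p q : {perm 'I_n}) (lo hi : 'I_n) :
  lo = r :> nat -> hi = (n - r.+1)%N :> nat ->
  framed r p q -> boxed r lo hi lo hi p q -> framed r.+1 p q.
Proof.
move=> lo_r hi_r fr [_ _ _ [plo phi qlo qhi] _] i ni.
have [wi|/fr//] := boolP (i \in window r).
have /orP[] : (i == lo) || (i == hi) by move: ni wi; rewrite !mem_window !ord_eqE; lia.
  by move=> /eqP ->; split => //; apply: val_inj; rewrite qlo /=; lia.
by move=> /eqP ->; split => //; apply: val_inj; rewrite qhi /=; have := ltn_ord lo; lia.
Qed.

Lemma boxed_improves_framed_succ (R : realFieldType) n r (A B : 'M[R]_n) p q (a b x y : 'I_n) :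
  monge A -> anti_monge B -> framed r p q -> boxed r a b x y p q ->
  exists p' q', improves A B r.+1 p q p' q'.
Proof.
move=> hA hB fr bx; have [wa wb _ _] := boxed_window fr bx.
have rn : (r < n)%N by move: wa; rewrite mem_window; lia.
have [lo lo_r] : {lo : 'I_n | lo = r :> nat} by exists (Ordinal rn).
have [hi hi_r] : {hi : 'I_n | hi = (n - r.+1)%N :> nat} by exists (rev_ord (Ordinal rn)).
have lo_le (i : 'I_n) : i \in window r -> (lo <= i)%N by rewrite mem_window; lia.
have le_hi (i : 'I_n) : i \in window r -> (i <= hi)%N by rewrite mem_window; lia.
have [p1 [q1 [x1 [y1 [imp1 bx1 _ _]]]]] := extend_row_low hA hB fr bx lo_r (lo_le _ wa).
have fr1 : framed r p1 q1 by case: imp1.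
have [p2 [q2 [x2 [y2 [imp2 bx2 _ _]]]]] := extend_row_high hA hB fr1 bx1 hi_r (le_hi _ wb).
have fr2 : framed r p2 q2 by case: imp2.
have [_ _ wx2 _] := boxed_window fr2 bx2.
have [p3 [q3 [a3 [b3 [imp3 bx3 a3_lo hi_b3]]]]] := extend_col_low hA hB fr2 bx2 lo_r (lo_le _ wx2).
have fr3 : framed r p3 q3 by case: imp3.
have [_ _ _ wy3] := boxed_window fr3 bx3.
have [p4 [q4 [a4 [b4 [imp4 bx4 a4_a3 b3_b4]]]]] := extend_col_high hA hB fr3 bx3 hi_r (le_hi _ wy3).
have fr4 : framed r p4 q4 by case: imp4.
have [wa4 wb4 _ _] := boxed_window fr4 bx4.
have a4_lo : a4 = lo by apply/eqP; rewrite ord_eqE; have := lo_le _ wa4; lia.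
have b4_hi : b4 = hi by apply/eqP; rewrite ord_eqE; have := le_hi _ wb4; lia.
rewrite a4_lo b4_hi in bx4; exists p4, q4.
have [_ ag c] := improves_trans imp1 (improves_trans imp2 (improves_trans imp3 imp4)).
by split => //; apply: framed_succ lo_r hi_r fr4 bx4.
Qed.

(** * Uncrossing *)

Lemma rearrangement_lt (u v c d : nat) : (u < v -> d < c -> u * c + v * d < u * d + v * c)%N.
Proof.
move=> uv dc; have -> : (u * d + v * c = u * c + v * d + (v - u) * (c - d))%N.
  by rewrite mulnBl !mulnBr; nia.
by rewrite -[X in (X < _)%N]addn0 ltn_add2l muln_gt0 !subn_gt0 uv dc.
Qed.

Definition uncrossable (R : realFieldType) n (A B : 'M[R]_n) r (p q : {perm 'I_n}) :=
  exists p' q', improves A B r p q p' q' /\ (potential p q < potential p' q')%N.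

Section Uncross.
Variables (R : realFieldType) (n r : nat) (A B : 'M[R]_n).
Hypotheses (hA : monge A) (hB : anti_monge B).
Variables (p q : {perm 'I_n}) (u v : 'I_n).
Hypotheses (fr : framed r p q) (wu : u \in window r) (wv : v \in window r) (uv : (u < v)%N).
Hypotheses (nu : p u != q u) (nv : p v != q v).

Let u2 : uniq [:: u; v]. Proof. by rewrite /= inE ord_eqE; lia. Qed.
Let w2 : {subset [:: u; v] <= window r}.
Proof. by move=> i; rewrite !in_cons in_nil orbF => /orP[] /eqP ->. Qed.

Lemma uncross_p : (p v < p u)%N -> uncrossable A B r p q.
Proof.
move=> puv; exists (swap_at u v p), q; have [P1 P2 P3] := swap_atE u v p.
have ag : agree_off [:: u; v] p q (swap_at u v p) q by move=> i /P3.
split; first split.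
- exact: framed_update fr w2 ag.
- by have := agreements_update u2 ag; rewrite !big_cons !big_nil (negbTE nu) (negbTE nv); lia.
- have := pair_cost_update u2 ag A B; rewrite !big_cons !big_nil P1 P2.
  have := hA uv puv; lra.
have := potential_update u2 ag; rewrite !big_cons !big_nil P1 P2.
have := rearrangement_lt uv puv; set pu := p u; set pv := p v; lia.
Qed.

Lemma uncross_q : (q u < q v)%N -> uncrossable A B r p q.
Proof.
move=> quv; exists p, (swap_at u v q); have [Q1 Q2 Q3] := swap_atE u v q.
have ag : agree_off [:: u; v] p q p (swap_at u v q) by move=> i /Q3.
split; first split.
- exact: framed_update fr w2 ag.
- by have := agreements_update u2 ag; rewrite !big_cons !big_nil (negbTE nu) (negbTE nv); lia.
- have := pair_cost_update u2 ag A B; rewrite !big_cons !big_nil Q1 Q2.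
  have := hB uv quv; lra.
have := potential_update u2 ag; rewrite !big_cons !big_nil Q1 Q2.
have : (rev_ord (q v) < rev_ord (q u))%N by rewrite /=; have := ltn_ord (q v); lia.
move=> /(rearrangement_lt uv); set qu := rev_ord (q u); set qv := rev_ord (q v); lia.
Qed.

End Uncross.

Section Normalize.
Variables (R : realFieldType) (n r : nat) (A B : 'M[R]_n).
Hypotheses (hA : monge A) (hB : anti_monge B).
Variables (p q : {perm 'I_n}).
Hypothesis (fr : framed r p q).

Let disagree := [pred i : 'I_n | (i \in window r) && (p i != q i)].

Lemma disagree_preimage_p i : disagree i -> exists2 i', disagree i' & p i' = q i.
Proof.
case/andP=> wi ne; exists ((p^-1)%g (q i)); last by rewrite permKV.
rewrite /= (framed_p_window (framed_inv fr) (framed_q_window fr wi)) permKV /=.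
by apply: contra ne => /eqP/perm_inj {1}->; rewrite permKV.
Qed.

Lemma disagree_preimage_q i : disagree i -> exists2 i', disagree i' & q i' = p i.
Proof.
case/andP=> wi ne; exists ((q^-1)%g (p i)); last by rewrite permKV.
rewrite /= (framed_q_window (framed_inv fr) (framed_p_window fr wi)) permKV /=.
by apply: contra ne => /eqP/perm_inj {2}<-; rewrite permKV.
Qed.

Lemma disagree_uncross_p u v : disagree u -> disagree v -> (u <= v)%N -> (p v <= p u)%N ->
  u = v \/ uncrossable A B r p q.
Proof.
move=> /andP[wu nu] /andP[wv nv] uv puv; have [//|neq] := eqVneq u v; [by left | right].
have pneq : p u != p v by rewrite (inj_eq perm_inj).
by apply: (uncross_p B hA fr wu wv _ nu nv); move: neq pneq; rewrite !ord_eqE; lia.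
Qed.

Lemma disagree_uncross_q u v : disagree u -> disagree v -> (u <= v)%N -> (q u <= q v)%N ->
  u = v \/ uncrossable A B r p q.
Proof.
move=> /andP[wu nu] /andP[wv nv] uv quv; have [//|neq] := eqVneq u v; [by left | right].
have qneq : q u != q v by rewrite (inj_eq perm_inj).
by apply: (uncross_q A hB fr wu wv _ nu nv); move: neq qneq; rewrite !ord_eqE; lia.
Qed.

Lemma boxed_or_uncrossable : (exists d, disagree d) ->
  (exists a b x y, boxed r a b x y p q) \/ uncrossable A B r p q.
Proof.
case=> d Pd.
have [a Pa a_min] := @arg_minnP _ d disagree (@nat_of_ord n) Pd.
have [b Pb b_max] := @arg_maxnP _ d disagree (@nat_of_ord n) Pd.
have [u Pu u_min] := @arg_minnP _ d disagree (fun i => nat_of_ord (p i)) Pd.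
have [v Pv v_max] := @arg_maxnP _ d disagree (fun i => nat_of_ord (p i)) Pd.
have q_range i : disagree i -> (p u <= q i <= p v)%N.
  by move=> /disagree_preimage_p[i' Pi' <-]; apply/andP; split; [exact: u_min | exact: v_max].
have [u' Pu' qu'] := disagree_preimage_q Pu.
have [v' Pv' qv'] := disagree_preimage_q Pv.
(* Unless some exchange uncrosses, the first and last disagreeing rows carry
   the extreme values of [p] and of [q]. *)
have [au|] := disagree_uncross_p Pa Pu (a_min _ Pu) (u_min _ Pa); last by right.
have [vb|] := disagree_uncross_p Pv Pb (b_max _ Pv) (v_max _ Pb); last by right.
have qav' : (q a <= q v')%N by rewrite qv'; case/andP: (q_range _ Pa).
have [av'|] := disagree_uncross_q Pa Pv' (a_min _ Pv') qav'; last by right.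
have qu'b : (q u' <= q b)%N by rewrite qu'; case/andP: (q_range _ Pb).
have [u'b|] := disagree_uncross_q Pu' Pb (b_max _ Pu') qu'b; last by right.
subst u v v' u'; left; exists a, b, (p a), (p b).
have [/andP[wa na] /andP[wb nb]] := (Pa, Pb).
have ab : a != b by apply: contra na => /eqP ab; rewrite qv' ab.
have pab : p a != p b by rewrite (inj_eq perm_inj).
split => //.
- by move: ab (b_max _ Pa); rewrite ord_eqE; lia.
- by move: pab (u_min _ Pb); rewrite ord_eqE; lia.
- by rewrite wa wb.
move=> i wi ne; have Pi : disagree i by rewrite /= wi.
rewrite /in_box q_range // andbT; apply/andP; split; apply/andP; split.
- exact: a_min.
- exact: b_max.
- exact: u_min.
- exact: v_max.
Qed.

End Normalize.

(** * Peeling the layers *)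

Lemma sum_ord_range N a b : (\sum_(i < N) ((a <= i < b) : nat) = minn N b - minn N a)%N.
Proof. by elim: N => [|N IH]; rewrite ?big_ord0 ?big_ord_recr /= ?IH; lia. Qed.

Section Counting.
Variable n : nat.
Implicit Types (r : nat) (p q : {perm 'I_n}).

Lemma agreementsE p q : agreements p q = #|[set i | p i == q i]|.
Proof.
rewrite /agreements -sum1_card [RHS]big_mkcond /=.
by apply: eq_bigr => i _; rewrite inE; case: (_ == _).
Qed.

Lemma card_window r : (2 * r <= n)%N -> #|(window r : {set 'I_n})| = (n - 2 * r)%N.
Proof.
move=> hr; rewrite -sum1_card big_mkcond /=.
rewrite (eq_bigr (fun i : 'I_n => (r <= i < n - r) : nat)) ?sum_ord_range; first lia.
by move=> i _; rewrite mem_window; case: (_ && _).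
Qed.

Lemma agreement_in_window r p q i : (2 * r <= n)%N -> framed r p q -> p i = q i -> i \in window r.
Proof.
move=> hr fr e; apply: contraT => ni; have [pi qi] := fr i ni.
by move: e ni; rewrite pi qi mem_window => /(congr1 val) /=; have := ltn_ord i; lia.
Qed.

Lemma agreements_add_disagree r p q (D : {set 'I_n}) : (2 * r <= n)%N -> framed r p q ->
  D \subset window r -> {in D, forall i, p i != q i} -> (agreements p q + #|D| <= n - 2 * r)%N.
Proof.
move=> hr fr Dw Dne; rewrite agreementsE -card_window //.
have sub : [set i | p i == q i] \subset window r :\: D.
  apply/subsetP => i; rewrite in_setD in_set => /eqP e; rewrite (agreement_in_window hr fr e) andbT.
  by apply/negP => /Dne; rewrite e eqxx.
have := subset_leq_card sub; rewrite cardsD (setIidPr Dw).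
have := subset_leq_card Dw; lia.
Qed.

Lemma agreements_window r p q : (2 * r <= n)%N -> framed r p q -> {in window r, p =1 q} ->
  agreements p q = (n - 2 * r)%N.
Proof.
move=> hr fr agr; rewrite agreementsE -card_window //; apply: eq_card => i.
by rewrite inE; apply/eqP/idP => [/(agreement_in_window hr fr) | /agr].
Qed.

Lemma potential_bound p q : (potential p q <= 2 * n ^ 3)%N.
Proof.
rewrite /potential (@leq_trans (\sum_(i : 'I_n) 2 * n ^ 2)%N) //.
  apply: leq_sum => i _; have := ltn_ord i; have := ltn_ord (p i); have := ltn_ord (rev_ord (q i)).
  by nia.
by rewrite sum_nat_const card_ord; lia.
Qed.

End Counting.

Section BreakOuterAgreements.
Variables (R : realFieldType) (n r : nat) (A B : 'M[R]_n).
Variables (p q : {perm 'I_n}) (lo hi j0 j1 : 'I_n).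
Hypotheses (fr : framed r p q) (agr : {in window r, p =1 q}).
Hypotheses (lo_r : lo = r :> nat) (hi_r : hi = (n - r.+1)%N :> nat) (lo_hi : (lo < hi)%N).
Hypotheses (plo : p lo = j0) (phi : p hi = j1).

Let wlo : lo \in window r. Proof. by rewrite mem_window; lia. Qed.
Let whi : hi \in window r. Proof. by rewrite mem_window; lia. Qed.
Let qlo : q lo = j0. Proof. by rewrite -(agr wlo). Qed.
Let qhi : q hi = j1. Proof. by rewrite -(agr whi). Qed.
Let u2 : uniq [:: lo; hi]. Proof. by rewrite /= inE ord_eqE; lia. Qed.
Let w2 : {subset [:: lo; hi] <= window r}.
Proof. by move=> i; rewrite !in_cons in_nil orbF => /orP[] /eqP ->. Qed.

Let boxed_lo_hi p' q' (x y : 'I_n) : (x < y)%N -> agree_off [:: lo; hi] p q p' q' ->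
  [/\ p' lo = x, p' hi = y, q' lo = y & q' hi = x] -> boxed r lo hi x y p' q'.
Proof.
move=> xy ag corners; split => //; first by rewrite wlo whi.
move=> i wi; have [|/ag[-> ->]] := boolP (i \in [:: lo; hi]); last by rewrite agr ?eqxx.
case: corners => pl ph ql qh.
by rewrite !in_cons in_nil orbF => /orP[] /eqP -> _; rewrite /in_box ?pl ?ph ?ql ?qh; lia.
Qed.

Lemma break_outer_agreements_q : anti_monge B -> (j0 < j1)%N ->
  let q' := swap_at lo hi q in
  [/\ framed r p q', boxed r lo hi j0 j1 p q', agreements p q = (agreements p q').+2 &
      pair_cost A B p q' <= pair_cost A B p q].
Proof.
move=> hB lt01 q'; have [Q1 Q2 Q3] := swap_atE lo hi q.
have ag : agree_off [:: lo; hi] p q p q' by move=> i /Q3.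
split.
- exact: framed_update fr w2 ag.
- by apply: boxed_lo_hi; rewrite ?Q1 ?Q2.
- by have := agreements_update u2 ag; rewrite !big_cons !big_nil Q1 Q2 plo phi qlo qhi !ord_eqE; lia.
have := pair_cost_update u2 ag A B; rewrite !big_cons !big_nil Q1 Q2 plo phi qlo qhi.
by have := hB _ _ _ _ lo_hi lt01; lra.
Qed.

Lemma break_outer_agreements_p : monge A -> (j1 < j0)%N ->
  let p' := swap_at lo hi p in
  [/\ framed r p' q, boxed r lo hi j1 j0 p' q, agreements p q = (agreements p' q).+2 &
      pair_cost A B p' q <= pair_cost A B p q].
Proof.
move=> hA lt10 p'; have [P1 P2 P3] := swap_atE lo hi p.
have ag : agree_off [:: lo; hi] p q p' q by move=> i /P3.
split.
- exact: framed_update fr w2 ag.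
- by apply: boxed_lo_hi; rewrite ?P1 ?P2.
- by have := agreements_update u2 ag; rewrite !big_cons !big_nil P1 P2 plo phi qlo qhi !ord_eqE; lia.
have := pair_cost_update u2 ag A B; rewrite !big_cons !big_nil P1 P2 plo phi qlo qhi.
by have := hA _ _ _ _ lo_hi lt10; lra.
Qed.

End BreakOuterAgreements.

Section Layers.
Variables (R : realFieldType) (n : nat) (A B : 'M[R]_n).
Hypotheses (hA : monge A) (hB : anti_monge B).
Implicit Types (k r : nat) (p q : {perm 'I_n}).

Lemma outer_agreements_boxed r p q : (2 * r.+1 <= n)%N -> framed r p q -> {in window r, p =1 q} ->
  exists p' q' (a b x y : 'I_n), [/\ framed r p' q', boxed r a b x y p' q',
    agreements p q = (agreements p' q').+2 & pair_cost A B p' q' <= pair_cost A B p q].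
Proof.
move=> hr fr agr; have rn : (r < n)%N by lia.
pose lo := Ordinal rn; pose hi := rev_ord lo.
have lo_r : lo = r :> nat by [].
have hi_r : hi = (n - r.+1)%N :> nat by [].
have lo_hi : (lo < hi)%N by lia.
have j01 : p lo != p hi by rewrite (inj_eq perm_inj) ord_eqE; lia.
case: (ltngtP (p lo) (p hi)) => [lt01|lt10|/val_inj e]; last by rewrite e eqxx in j01.
  have [] := break_outer_agreements_q A fr agr lo_r hi_r lo_hi erefl erefl hB lt01.
  by exists p, (swap_at lo hi q), lo, hi, (p lo), (p hi).
have [] := break_outer_agreements_p B fr agr lo_r hi_r lo_hi erefl erefl hA lt10.
by exists (swap_at lo hi p), q, lo, hi, (p hi), (p lo).
Qed.

Lemma framed_step k r p q : (2 * r.+1 <= n - k)%N -> framed r p q -> (k <= agreements p q)%N ->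
  exists p' q', [/\ framed r.+1 p' q', (k <= agreements p' q')%N &
                    pair_cost A B p' q' <= pair_cost A B p q].
Proof.
move=> hr; have [N] := ubnP (2 * n ^ 3 - potential p q).
elim: N p q => // N IH p q ltN fr kpq.
have [/existsP dis | /existsPn agr] := boolP [exists i, (i \in window r) && (p i != q i)].
  case: (boxed_or_uncrossable hA hB fr dis) => [[a [b [x [y bx]]]] | [p' [q' [imp lt]]]].
    have [p' [q' [fr' ag c]]] := boxed_improves_framed_succ hA hB fr bx.
    by exists p', q'; split => //; apply: leq_trans ag.
  have [fr' ag c] := imp; have bound := potential_bound p' q'.
  have [|p'' [q'' [fr'' ag'' c'']]] := IH p' q' _ fr' (leq_trans kpq ag).
    by move: ltN lt bound; set M := (2 * n ^ 3)%N; lia.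
  by exists p'', q''; split => //; apply: le_trans c.
have {}agr : {in window r, p =1 q} by move=> i wi; apply/eqP; have := agr i; rewrite wi negbK.
have [|p1 [q1 [a [b [x [y [fr1 bx1 ag1 c1]]]]]]] := outer_agreements_boxed _ fr agr; first lia.
have [p2 [q2 [fr2 ag2 c2]]] := boxed_improves_framed_succ hA hB fr1 bx1.
exists p2, q2; split => //; last exact: le_trans c1.
by move: ag1; rewrite (agreements_window _ fr agr); lia.
Qed.

Lemma framed_reach k r p q : (2 * r <= n - k)%N -> (k <= agreements p q)%N ->
  exists p' q', [/\ framed r p' q', (k <= agreements p' q')%N &
                    pair_cost A B p' q' <= pair_cost A B p q].
Proof.
elim: r => [|r IH] hr kpq.
  by exists p, q; split => // i; rewrite mem_window subn0 ltn_ord.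
have [|p1 [q1 [fr1 k1 c1]]] := IH _ kpq; first lia.
have [p2 [q2 [fr2 k2 c2]]] := framed_step hr fr1 k1.
by exists p2, q2; split => //; apply: le_trans c1.
Qed.

Lemma framed_half_agree k p q : (k <= n)%N -> framed ((n - k) %/ 2) p q ->
  (k <= agreements p q)%N -> {in window ((n - k) %/ 2), p =1 q}.
Proof.
set m := ((n - k) %/ 2)%N => kn fr kpq d wd; apply/eqP; apply: contraT => ne.
have Pd : (d \in window m) && (p d != q d) by rewrite wd.
have [d' /andP[wd' ne'] qd'] := disagree_preimage_p fr Pd.
have dd' : d != d' by apply: contra ne => /eqP e; rewrite -qd' -e.
(* The disagreement at [d] forces a second one at [d'], leaving fewer than [k] agreements. *)
have hm : (2 * m <= n)%N by move: wd; rewrite mem_window; lia.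
have Dw : [set d; d'] \subset window m.
  by apply/subsetP => i; rewrite in_set2 => /orP[] /eqP ->.
have Dne : {in [set d; d'], forall i, p i != q i} by move=> i; rewrite in_set2 => /orP[] /eqP ->.
by have := agreements_add_disagree hm fr Dw Dne; rewrite cards2 dd' /m; lia.
Qed.

Lemma framed_half_reduction k p q : (k <= n)%N -> (k <= agreements p q)%N ->
  exists p' q', [/\ framed ((n - k) %/ 2) p' q', {in window ((n - k) %/ 2), p' =1 q'} &
                    pair_cost A B p' q' <= pair_cost A B p q].
Proof.
move=> kn kpq; have [|p' [q' [fr' k' c']]] := framed_reach (r := (n - k) %/ 2) _ kpq; first lia.
by exists p', q'; split => //; apply: framed_half_agree.
Qed.

End Layers.

(** * Back to matchings *)

Section Matchings.
Variable n : nat.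
Implicit Types (S : {set 'I_n}) (p q s : {perm 'I_n}) (M : {set 'I_n * 'I_n}).

Definition graph_on S s : {set 'I_n * 'I_n} := [set (i, s i) | i in S].

Lemma perm_onT s : perm_on setT s.
Proof. by apply/subsetP => i; rewrite inE. Qed.

Lemma mem_graph_on S s i j : ((i, j) \in graph_on S s) = (i \in S) && (s i == j).
Proof.
by apply/imsetP/andP => [[i' Si' [-> ->]] // | [Si /eqP <-]]; exists i.
Qed.

Lemma is_pm_graph_on S s : perm_on S s -> is_pm S (graph_on S s).
Proof.
move=> sS; split; [|split].
- by apply/subsetP => -[i j]; rewrite mem_graph_on in_setX => /andP[Si /eqP <-]; rewrite perm_closed ?Si.
- move=> i Si; rewrite -(cards1 (s i)); apply: eq_card => j.
  by rewrite !inE mem_graph_on Si eq_sym.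
move=> j Sj; rewrite -(cards1 ((s^-1)%g j)); apply: eq_card => i.
rewrite !inE mem_graph_on; apply/andP/eqP => [[_ /eqP <-]|->]; first by rewrite permK.
by rewrite permKV perm_closed ?Sj // perm_onV.
Qed.

Lemma is_pmP S M : is_pm S M -> exists2 s, perm_on S s & M = graph_on S s.
Proof.
case=> MS [rows cols].
have uniq_in (A : {set 'I_n}) a b : #|A| = 1%N -> a \in A -> b \in A -> a = b.
  by move=> /eqP/cards1P[c ->]; rewrite !inE => /eqP -> /eqP ->.
pose f i := if i \in S then odflt i [pick j | (i, j) \in M] else i.
have fM i : i \in S -> (i, f i) \in M.
  move=> Si; rewrite /f Si; case: pickP => [//|none].
  by have := rows i Si; rewrite (eq_card0 (A := [set j | (i, j) \in M])) // => j; rewrite inE none.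
have fS i : i \in S -> f i \in S.
  by move=> /fM /(subsetP MS); rewrite in_setX => /andP[].
have fout i : i \notin S -> f i = i by move=> /negbTE Si; rewrite /f Si.
have f_inj : injective f.
  move=> i1 i2; have [S1|S1] := boolP (i1 \in S); have [S2|S2] := boolP (i2 \in S).
  - move=> e; apply: (uniq_in _ _ _ (cols _ (fS _ S1))); rewrite inE; [exact: fM | rewrite e; exact: fM].
  - by move=> e; move: (fS _ S1); rewrite e fout ?(negbTE S2).
  - by move=> e; move: (fS _ S2); rewrite -e fout ?(negbTE S1).
  - by rewrite !fout.
exists (perm f_inj).
  by apply/subsetP => i; rewrite inE permE; apply: contraR => /fout ->; rewrite eqxx.
apply/setP => -[i j]; rewrite mem_graph_on permE; apply/idP/andP => [ij|[Si /eqP <-]]; last exact: fM.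
have Si : i \in S by move: (subsetP MS _ ij); rewrite in_setX => /andP[].
split=> //; apply/eqP; apply: (uniq_in _ _ _ (rows _ Si)); rewrite inE; [exact: fM | exact: ij].
Qed.

Lemma mcost_graph_on (R : realFieldType) (C : 'M[R]_n) S s :
  mcost C (graph_on S s) = \sum_(i in S) C i (s i).
Proof. by rewrite /mcost big_imset //= => i j _ _ []. Qed.

Lemma mcost_graph_pair (R : realFieldType) (A B : 'M[R]_n) p q :
  mcost A (graph_on setT p) + mcost B (graph_on setT q) = pair_cost A B p q.
Proof.
rewrite !mcost_graph_on /pair_cost big_split /=.
by congr (_ + _); apply: eq_bigl => i; rewrite inE.
Qed.

Lemma graph_onI S p q : graph_on S p :&: graph_on S q = graph_on [set i in S | p i == q i] p.
Proof.
apply/setP => -[i j]; rewrite inE !mem_graph_on inE.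
by case: (p i =P j) => [<-|]; rewrite ?andbF ?andbT // eq_sym andbA andbb.
Qed.

Lemma card_graph_onT_I p q : #|graph_on setT p :&: graph_on setT q| = agreements p q.
Proof.
rewrite graph_onI card_in_imset => [|i j _ _ []//].
by rewrite agreementsE; apply: eq_card => i; rewrite !inE.
Qed.

End Matchings.

Section Canonical.
Variables (n m : nat).
Implicit Types (p q s : {perm 'I_n}).

Definition frame_fun (i : 'I_n) := if i \in window m then i else rev_ord i.

Lemma frame_fun_inj : injective frame_fun.
Proof.
move=> i j; rewrite /frame_fun; case: ifP => wi; case: ifP => wj //.
- by move=> e; rewrite e window_rev wj in wi.
- by move=> e; rewrite -e window_rev wi in wj.
exact: rev_ord_inj.
Qed.

Definition frame_perm : {perm 'I_n} := perm frame_fun_inj.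

Lemma canonical_framed s : perm_on (window m) s ->
  framed m s (s * frame_perm)%g /\ {in window m, s =1 (s * frame_perm)%g}.
Proof.
move=> sW; split => i wi; rewrite permM permE /frame_fun.
  by rewrite (out_perm sW wi) (negbTE wi).
by rewrite perm_closed ?wi.
Qed.

Lemma canonical_pairE p q : framed m p q -> {in window m, p =1 q} ->
  perm_on (window m) p /\ q = (p * frame_perm)%g.
Proof.
move=> fr agr; split.
  by apply/subsetP => i; rewrite inE; apply: contraR => /fr[-> _]; rewrite eqxx.
apply/permP => i; rewrite permM permE /frame_fun.
have [wi|wi] := boolP (i \in window m); first by rewrite (framed_p_window fr wi) agr.
by have [-> ->] := fr i wi; rewrite (negbTE wi).
Qed.

Lemma canonical_pair_cost (R : realFieldType) (A B : 'M[R]_n) s : perm_on (window m) s ->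
  pair_cost A B s (s * frame_perm)%g =
    \sum_(i in ~: window m) (A i i + B i (rev_ord i)) + \sum_(i in window m) (A + B) i (s i).
Proof.
move=> sW; have [fr agr] := canonical_framed sW.
rewrite /pair_cost (bigID (mem (window m))) /= addrC; congr (_ + _).
  by apply: eq_big => [i|i wi]; [rewrite in_setC | have [-> ->] := fr i wi].
by apply: eq_bigr => i wi; rewrite -(agr i wi) mxE.
Qed.

End Canonical.

Lemma recov_optimal_canonical (R : realFieldType) n k (A B : 'M[R]_n) (s0 : {perm 'I_n}) :
  (k <= n)%N -> monge A -> anti_monge B ->
  let m := ((n - k) %/ 2)%N in perm_on (window m) s0 ->
  (forall s, perm_on (window m) s ->
     \sum_(i in window m) (A + B) i (s0 i) <= \sum_(i in window m) (A + B) i (s i)) ->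
  recov_optimal A B k (graph_on setT s0) (graph_on setT (s0 * frame_perm n m)%g).
Proof.
move=> kn hA hB m s0W s0_min; have [fr0 agr0] := canonical_framed s0W.
split.
  split; [|split]; try exact/is_pm_graph_on/perm_onT.
  by rewrite card_graph_onT_I (agreements_window _ fr0 agr0) /m; lia.
move=> N1 N2 [/is_pmP[p _ ->] [/is_pmP[q _ ->]]]; rewrite card_graph_onT_I !mcost_graph_pair.
move=> /(framed_half_reduction hA hB kn)[p' [q' [fr' agr' c']]]; apply: le_trans c'.
have [p'W ->] := canonical_pairE fr' agr'.
by rewrite !canonical_pair_cost // lerD2l s0_min.
Qed.

Theorem theorem6 (R : realFieldType) (n k : nat) (A B : 'M[R]_n) :
  (k <= n)%N -> monge A -> anti_monge B ->
  let m := ((n - k) %/ 2)%N in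
  let I := [set i : 'I_n | (i < m)%N || (n - m <= i)%N] in
  let J := [set i : 'I_n | (m <= i)%N && (i < n - m)%N] in
  exists M1 M2 : {set 'I_n * 'I_n},
    [/\ recov_optimal A B k M1 M2,
        (forall i, i \in I -> (i, i) \in M1),
        (forall i, i \in I -> (i, rev_ord i) \in M2) &
        opt_assignment (A + B) J (M1 :&: M2)].
Proof.
move=> kn hA hB m I J.
have IJ i : (i \in I) = (i \notin window m) by rewrite !inE; lia.
have [s0 s0W s0_min] := @arg_minP _ _ _ 1%g (perm_on (window m))
  (fun s => \sum_(i in window m) (A + B) i (s i)) (perm_on1 _).
have [fr0 agr0] := canonical_framed s0W.
exists (graph_on setT s0), (graph_on setT (s0 * frame_perm n m)%g); split.
- exact: recov_optimal_canonical.
- by move=> i; rewrite IJ mem_graph_on in_setT => /(out_perm s0W) ->; rewrite eqxx.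
- by move=> i; rewrite IJ mem_graph_on in_setT => /fr0[_ ->]; rewrite eqxx.
have -> : graph_on setT s0 :&: graph_on setT (s0 * frame_perm n m)%g = graph_on J s0.
  have hm : (2 * m <= n)%N by lia.
  rewrite graph_onI; congr graph_on; apply/setP => i; rewrite !inE -mem_window.
  by apply/eqP/idP => [/(agreement_in_window hm fr0) | /agr0].
split; first exact: is_pm_graph_on.
by move=> M' /is_pmP[s sW ->]; rewrite !mcost_graph_on s0_min.
Qed.
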